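(* Let $G\le\mathrm{O}(d)$ have closed orbits and let $z_1,\ldots,z_n\in\mathbb{R}^d$. Then the max filter bank $\Phi:\mathbb{R}^d/G\to\mathbb{R}^n$, $\Phi([x])=(\langle\!\langle[z_i],[x]\rangle\!\rangle)_{i=1}^n$, satisfies $$\sup_{\substack{[x],[y]\in\mathbb{R}^d/G\\ [x]\ne[y]}}\frac{\|\Phi([x])-\Phi([y])\|}{d([x],[y])}\le\sup_{g_1,\ldots,g_n\in G}\big\|[\,g_1z_1\ \cdots\ g_nz_n\,]\big\|_{2\to2}.$$ Moreover, equality holds if $-\mathrm{id}\in G$.
   Context: For $x\in\mathbb{R}^d$, $[x]:=\{gx:g\in G\}$; $\mathbb{R}^d/G$ is the set of orbits with quotient metric $d([x],[y]):=\inf_{p\in[x],q\in[y]}\|p-q\|$. Max filtering: $\langle\!\langle[x],[y]\rangle\!\rangle:=\sup_{p\in[x],q\in[y]}\langle p,q\rangle$. $[\,g_1z_1\ \cdots\ g_nz_n\,]$ is the $d\times n$ matrix with columns $g_iz_i$ and $\|\cdot\|_{2\to2}$ is the spectral norm. *)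

From HB Require Import structures.
From mathcomp Require Import all_boot all_order all_algebra.
From mathcomp Require Import all_classical all_reals ereal.
Set Implicit Arguments. Unset Strict Implicit. Unset Printing Implicit Defensive.
Import Order.TTheory GRing.Theory Num.Theory.
Local Open Scope ring_scope.
Local Open Scope classical_set_scope.

Section MaxFilter.
Variable R : realType.

Definition dotv (d : nat) (u v : 'cV[R]_d) : R := \sum_(i < d) u i 0 * v i 0.
Definition enorm (d : nat) (u : 'cV[R]_d) : R := Num.sqrt (dotv u u).

Definition is_subgroup_O (d : nat) (G : set 'M[R]_d) : Prop :=
  [/\ G 1%:M,
      (forall g h, G g -> G h -> G (g *m h)),
      (forall g, G g -> G (invmx g)) &
      (forall g, G g -> g^T *m g = 1%:M)].

Definition orbit (d : nat) (G : set 'M[R]_d) (x : 'cV[R]_d) : set 'cV[R]_d :=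
  [set p | exists2 g, G g & p = g *m x].

Definition eclosed (d : nat) (S : set 'cV[R]_d) : Prop :=
  forall y, (forall e : R, 0 < e -> exists2 p, S p & enorm (p - y) < e) -> S y.

Definition closed_orbits (d : nat) (G : set 'M[R]_d) : Prop :=
  forall x, eclosed (orbit G x).

Definition qdist (d : nat) (G : set 'M[R]_d) (x y : 'cV[R]_d) : R :=
  inf [set enorm (p - q) | p in orbit G x & q in orbit G y].

Definition maxfilt (d : nat) (G : set 'M[R]_d) (x y : 'cV[R]_d) : R :=
  sup [set dotv p q | p in orbit G x & q in orbit G y].

Definition Phi (d n : nat) (G : set 'M[R]_d) (z : 'I_n -> 'cV[R]_d)
  (x : 'cV[R]_d) : 'cV[R]_n := \col_(i < n) maxfilt G (z i) x.

Definition opnorm (m n : nat) (A : 'M[R]_(m, n)) : R :=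
  sup [set enorm (A *m v) | v in [set v : 'cV[R]_n | enorm v <= 1]].

Definition colmat (d n : nat) (g : 'I_n -> 'M[R]_d) (z : 'I_n -> 'cV[R]_d)
  : 'M[R]_(d, n) := \matrix_(i < d, j < n) (g j *m z j) i 0.

Definition lip_Phi (d n : nat) (G : set 'M[R]_d) (z : 'I_n -> 'cV[R]_d) : \bar R :=
  ereal_sup [set r | exists x y : 'cV[R]_d, orbit G x <> orbit G y /\
     r = ((enorm (Phi G z x - Phi G z y)) / qdist G x y)%:E].

Definition sup_colnorm (d n : nat) (G : set 'M[R]_d) (z : 'I_n -> 'cV[R]_d) : \bar R :=
  ereal_sup [set (opnorm (colmat g z))%:E
            | g in [set g : 'I_n -> 'M[R]_d | forall i, G (g i)]].

End MaxFilter.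

(* For every i, max filtering is attained up to [e] by a pair of group elements, so
   <<[z_i],[x]>> - <<[z_i],[y]>> <= <g_i z_i, x - y> + e for some g_i in G, and
   symmetrically.  Hence, up to [e] in each coordinate, |Phi(x) - Phi(y)| is dominated
   by |A^T (x - y)| with A = [g_1 z_1 ... g_n z_n], giving |Phi(x) - Phi(y)| <= |A| |x - y|.
   As Phi is G-invariant, |x - y| may be replaced by any |p - q| with p in [x], q in [y],
   i.e. by d([x],[y]).  If -id is in G, then |<g_i z_i, v>| <= <<[z_i],[v]>>, so
   |A^T v| <= |Phi(v) - Phi(0)| while d([v],[0]) = |v|; as |A^T| = |A| this gives the
   reverse inequality. *)

From Pilot Require Import Defs.
From HB Require Import structures.
From mathcomp Require Import all_boot all_order all_algebra.
From mathcomp Require Import all_classical all_reals ereal.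
From mathcomp Require Import ring lra.
Set Implicit Arguments. Unset Strict Implicit. Unset Printing Implicit Defensive.
Import Order.TTheory GRing.Theory Num.Theory.
Local Open Scope ring_scope.
Local Open Scope classical_set_scope.

(* [fingraph] exports another [orbit]. *)
Local Notation orbit := Defs.orbit.

Section Euclidean.
Variable R : realType.
Implicit Types (d m k : nat).

Lemma dotvE d (u v : 'cV[R]_d) : dotv u v = (u^T *m v) 0 0.
Proof. by rewrite /dotv mxE; apply: eq_bigr => i _; rewrite mxE. Qed.

Lemma dotvC d (u v : 'cV[R]_d) : dotv u v = dotv v u.
Proof. by rewrite /dotv; apply: eq_bigr => i _; rewrite mulrC. Qed.

Lemma dotv0l d (v : 'cV[R]_d) : dotv 0 v = 0.
Proof. by rewrite /dotv big1 // => i _; rewrite mxE mul0r. Qed.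

Lemma dotvDl d (u v w : 'cV[R]_d) : dotv (u + v) w = dotv u w + dotv v w.
Proof. by rewrite /dotv -big_split; apply: eq_bigr => i _; rewrite mxE mulrDl. Qed.

Lemma dotvNl d (u w : 'cV[R]_d) : dotv (- u) w = - dotv u w.
Proof. by rewrite /dotv -sumrN; apply: eq_bigr => i _; rewrite mxE mulNr. Qed.

Lemma dotvZl d a (u w : 'cV[R]_d) : dotv (a *: u) w = a * dotv u w.
Proof. by rewrite /dotv mulr_sumr; apply: eq_bigr => i _; rewrite mxE mulrA. Qed.

Lemma dotvBl d (u v w : 'cV[R]_d) : dotv (u - v) w = dotv u w - dotv v w.
Proof. by rewrite dotvDl dotvNl. Qed.

Lemma dotvDr d (u v w : 'cV[R]_d) : dotv w (u + v) = dotv w u + dotv w v.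
Proof. by rewrite !(dotvC w) dotvDl. Qed.

Lemma dotvNr d (u w : 'cV[R]_d) : dotv w (- u) = - dotv w u.
Proof. by rewrite !(dotvC w) dotvNl. Qed.

Lemma dotvZr d a (u w : 'cV[R]_d) : dotv w (a *: u) = a * dotv w u.
Proof. by rewrite !(dotvC w) dotvZl. Qed.

Lemma dotvBr d (u v w : 'cV[R]_d) : dotv w (u - v) = dotv w u - dotv w v.
Proof. by rewrite dotvDr dotvNr. Qed.

Lemma dotv_mulmx d k (A : 'M[R]_(d, k)) u v : dotv (A *m u) v = dotv u (A^T *m v).
Proof. by rewrite !dotvE trmx_mul mulmxA. Qed.

Lemma dotv_orthmx d (g : 'M[R]_d) u v :
  g^T *m g = 1%:M -> dotv (g *m u) (g *m v) = dotv u v.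
Proof. by move=> gTg; rewrite dotv_mulmx mulmxA gTg mul1mx. Qed.

Lemma dotvv_ge0 d (u : 'cV[R]_d) : 0 <= dotv u u.
Proof. by apply: sumr_ge0 => i _; rewrite -expr2 sqr_ge0. Qed.

Lemma dotvv_eq0 d (u : 'cV[R]_d) : (dotv u u == 0) = (u == 0).
Proof.
apply/idP/eqP => [|->]; last by rewrite dotv0l.
rewrite psumr_eq0 => [/allP u0|i _]; last by rewrite -expr2 sqr_ge0.
apply/matrixP => i j; rewrite (ord1 j) mxE.
by have := u0 i (mem_index_enum _); rewrite /= mulf_eq0 orbb => /eqP.
Qed.

Lemma enorm_ge0 d (u : 'cV[R]_d) : 0 <= enorm u.
Proof. exact: sqrtr_ge0. Qed.

Lemma enorm_sqr d (u : 'cV[R]_d) : enorm u ^+ 2 = dotv u u.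
Proof. by rewrite sqr_sqrtr // dotvv_ge0. Qed.

Lemma enorm_eq0 d (u : 'cV[R]_d) : (enorm u == 0) = (u == 0).
Proof. by rewrite sqrtr_eq0 le_eqVlt ltNge dotvv_ge0 orbF dotvv_eq0. Qed.

Lemma enorm_gt0 d (u : 'cV[R]_d) : (0 < enorm u) = (u != 0).
Proof. by rewrite lt_def enorm_ge0 andbT enorm_eq0. Qed.

Lemma enorm0 d : enorm (0 : 'cV[R]_d) = 0.
Proof. by apply/eqP; rewrite enorm_eq0. Qed.

Lemma enormZ d a (u : 'cV[R]_d) : enorm (a *: u) = `|a| * enorm u.
Proof. by rewrite /enorm dotvZl dotvZr mulrA -expr2 sqrtrM ?sqr_ge0 // sqrtr_sqr. Qed.

Lemma enormN d (u : 'cV[R]_d) : enorm (- u) = enorm u.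
Proof. by rewrite -scaleN1r enormZ normrN1 mul1r. Qed.

Lemma enorm_orthmx d (g : 'M[R]_d) u : g^T *m g = 1%:M -> enorm (g *m u) = enorm u.
Proof. by move=> gTg; rewrite /enorm dotv_orthmx. Qed.

Lemma dotv_le_enorm d (u v : 'cV[R]_d) : dotv u v <= enorm u * enorm v.
Proof.
have [ab0|ab_neq0] := eqVneq (enorm u * enorm v) 0.
  rewrite ab0; move/eqP: ab0; rewrite mulf_eq0 !enorm_eq0 => /orP[]/eqP->.
    by rewrite dotv0l.
  by rewrite dotvC dotv0l.
have ab_gt0 : 0 < enorm u * enorm v by rewrite lt_def ab_neq0 mulr_ge0 ?enorm_ge0.
set a := enorm u in ab_gt0 *; set b := enorm v in ab_gt0 *; set c := dotv u v.
have : 0 <= 2 * (a * b) * (a * b - c).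
  (* this is |b u - a v|^2 *)
  have := dotvv_ge0 (b *: u - a *: v).
  rewrite !(dotvBl, dotvBr, dotvZl, dotvZr) (dotvC v u) -!enorm_sqr -/a -/b -/c.
  by congr (_ <= _); ring.
by rewrite pmulr_rge0 ?subr_ge0 // mulr_gt0.
Qed.

Lemma normr_dotv_le d (u v : 'cV[R]_d) : `|dotv u v| <= enorm u * enorm v.
Proof.
rewrite ler_norml dotv_le_enorm andbT lerNl -dotvNl -(enormN u).
exact: dotv_le_enorm.
Qed.

Lemma enormD d (u v : 'cV[R]_d) : enorm (u + v) <= enorm u + enorm v.
Proof.
rewrite -(ler_pXn2r (_ : 0 < 2)%N) ?nnegrE ?addr_ge0 ?enorm_ge0 //.
rewrite enorm_sqr dotvDl !dotvDr (dotvC v u) sqrrD -!enorm_sqr.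
have := dotv_le_enorm u v; lra.
Qed.

Lemma enorm_le_pointwise d (u v : 'cV[R]_d) :
  (forall i, `|u i 0| <= `|v i 0|) -> enorm u <= enorm v.
Proof.
move=> uv; rewrite ler_sqrt ?dotvv_ge0 //; apply: ler_sum => i _.
rewrite -!expr2 -(real_normK (num_real (u i 0))) -(real_normK (num_real (v i 0))).
by rewrite ler_pXn2r ?nnegrE.
Qed.

Lemma enorm_map_normr d (u : 'cV[R]_d) : enorm (map_mx Num.norm u) = enorm u.
Proof. by apply/le_anti; rewrite !enorm_le_pointwise // => i; rewrite mxE normr_id. Qed.

Lemma opnorm_has_sup m k (A : 'M[R]_(m, k)) :
  has_sup [set enorm (A *m v) | v in [set v : 'cV[R]_k | enorm v <= 1]].
Proof.
split; first by exists (enorm (A *m 0)), 0; rewrite //= enorm0.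
exists (enorm (\col_i enorm (row i A)^T)) => _ [v v_le1 <-].
apply: enorm_le_pointwise => i.
have -> : (A *m v) i 0 = dotv (row i A)^T v.
  by rewrite mxE; apply: eq_bigr => j _; rewrite !mxE.
rewrite mxE (ger0_norm (enorm_ge0 _)).
apply: le_trans (normr_dotv_le _ _) _.
by rewrite ler_piMr ?enorm_ge0.
Qed.

Lemma opnorm_ge0 m k (A : 'M[R]_(m, k)) : 0 <= opnorm A.
Proof.
have : enorm (A *m 0) <= opnorm A.
  by apply: (sup_upper_bound (opnorm_has_sup A)); exists 0; rewrite //= enorm0.
by rewrite mulmx0 enorm0.
Qed.

Lemma enorm_mulmx_le m k (A : 'M[R]_(m, k)) v : enorm (A *m v) <= opnorm A * enorm v.
Proof.
have [->|v_neq0] := eqVneq v 0; first by rewrite mulmx0 !enorm0 mulr0.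
have v_gt0 : 0 < enorm v by rewrite enorm_gt0.
have : enorm (A *m ((enorm v)^-1 *: v)) <= opnorm A.
  apply: (sup_upper_bound (opnorm_has_sup A)); exists ((enorm v)^-1 *: v) => //=.
  by rewrite enormZ ger0_norm ?invr_ge0 ?enorm_ge0 // mulVf ?gt_eqF.
by rewrite -scalemxAr enormZ ger0_norm ?invr_ge0 ?enorm_ge0 // mulrC ler_pdivrMr.
Qed.

Lemma opnorm_le m k (A : 'M[R]_(m, k)) L :
  0 <= L -> (forall v, enorm (A *m v) <= L * enorm v) -> opnorm A <= L.
Proof.
move=> L_ge0 AL; apply: ge_sup; first by exists (enorm (A *m 0)), 0; rewrite //= enorm0.
by move=> _ [v v_le1 <-]; apply: le_trans (AL v) _; rewrite ler_piMr.
Qed.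

Lemma enorm_trmx_mulmx_le m k (A : 'M[R]_(m, k)) u :
  enorm (A^T *m u) <= opnorm A * enorm u.
Proof.
set x := enorm (A^T *m u).
have x_ge0 : 0 <= x := enorm_ge0 _.
have [->|x_neq0] := eqVneq x 0; first by rewrite mulr_ge0 ?opnorm_ge0 ?enorm_ge0.
have x_gt0 : 0 < x by rewrite lt_def x_neq0.
suff : x * x <= x * (opnorm A * enorm u) by rewrite ler_pM2l.
rewrite -expr2 enorm_sqr dotv_mulmx trmxK; apply: le_trans (dotv_le_enorm _ _) _.
apply: le_trans (ler_wpM2l (enorm_ge0 u) (enorm_mulmx_le _ _)) _; rewrite -/x; lra.
Qed.

Lemma opnorm_trmx m k (A : 'M[R]_(m, k)) : opnorm A^T = opnorm A.
Proof.
apply/le_anti; rewrite !opnorm_le ?opnorm_ge0 // => v.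
  by rewrite -[A in A *m v]trmxK enorm_trmx_mulmx_le.
exact: enorm_trmx_mulmx_le.
Qed.

Lemma opnorm_le_ereal m k (A : 'M[R]_(m, k)) (L : \bar R) : (0 < k)%N ->
  (forall v, v != 0 -> ((enorm (A *m v) / enorm v)%:E <= L)%E) ->
  ((opnorm A)%:E <= L)%E.
Proof.
move=> k_gt0 AL; have one_neq0 : const_mx 1 != 0 :> 'cV[R]_k.
  by apply/eqP => /matrixP /(_ (Ordinal k_gt0) 0) /eqP; rewrite !mxE oner_eq0.
case: L AL => [L| |] AL; last 2 first.
- exact: leey.
- by have := AL _ one_neq0; rewrite leeNy_eq.
rewrite lee_fin; apply: opnorm_le => [|v].
  by have := AL _ one_neq0; rewrite lee_fin; apply: le_trans; rewrite divr_ge0 ?enorm_ge0.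
have [->|v_neq0] := eqVneq v 0; first by rewrite mulmx0 !enorm0 mulr0.
by have := AL _ v_neq0; rewrite lee_fin ler_pdivrMr // enorm_gt0.
Qed.

Lemma colmat_trmx_mulmx d n (g : 'I_n -> 'M[R]_d) (z : 'I_n -> 'cV[R]_d) w i :
  ((colmat g z)^T *m w) i 0 = dotv (g i *m z i) w.
Proof. by rewrite mxE; apply: eq_bigr => k _; rewrite !mxE. Qed.

End Euclidean.

Section MaxFiltering.
Variables (R : realType) (d : nat) (G : set 'M[R]_d).
Hypothesis HG : is_subgroup_O G.

Let G1 : G 1%:M. Proof. by case: HG. Qed.
Let GM g h : G g -> G h -> G (g *m h). Proof. by case: HG => _ GM _ _; apply: GM. Qed.
Let GO g : G g -> g^T *m g = 1%:M. Proof. by case: HG => _ _ _ GO; apply: GO. Qed.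

Lemma subgroup_O_trmx g : G g -> G g^T.
Proof.
move=> Gg; case: HG => _ _ GV _.
have [_ g_unit] := mulmx1_unit (GO Gg).
suff <- : invmx g = g^T by apply: GV.
by rewrite -[invmx g]mulmx1 -(mulmx1C (GO Gg)) mulmxA mulVmx // mul1mx.
Qed.

Lemma orbit_refl x : orbit G x x.
Proof. by exists 1%:M; rewrite ?mul1mx. Qed.

Lemma orbit_mulmx g x : G g -> orbit G (g *m x) = orbit G x.
Proof.
move=> Gg; apply/seteqP; split => _ [h Gh ->].
  by exists (h *m g); [exact: GM | rewrite mulmxA].
exists (h *m g^T); first by apply: GM => //; apply: subgroup_O_trmx.
by rewrite -mulmxA (mulmxA g^T) GO ?mul1mx.
Qed.

Lemma maxfilt_has_sup z x : has_sup [set dotv p q | p in orbit G z & q in orbit G x].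
Proof.
split; first by exists (dotv z x), z; [exact: orbit_refl | exists x => //; exact: orbit_refl].
exists (enorm z * enorm x) => _ [_ [a Ga ->] [_ [b Gb ->] <-]].
by rewrite -(enorm_orthmx z (GO Ga)) -(enorm_orthmx x (GO Gb)) dotv_le_enorm.
Qed.

Lemma maxfilt_ge a b z x : G a -> G b -> dotv (a *m z) (b *m x) <= maxfilt G z x.
Proof.
move=> Ga Gb; apply: (sup_upper_bound (maxfilt_has_sup z x)).
by exists (a *m z); [exists a | exists (b *m x) => //; exists b].
Qed.

Lemma maxfilt_approx z x e : 0 < e ->
  exists a b, [/\ G a, G b & maxfilt G z x - e < dotv (a *m z) (b *m x)].
Proof.
move=> e_gt0.
have [_ [_ [a Ga ->] [_ [b Gb ->] <-]] mf_lt] := sup_adherent e_gt0 (maxfilt_has_sup z x).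
by exists a, b.
Qed.

Lemma Phi_mulmx n (z : 'I_n -> 'cV[R]_d) g x : G g -> Phi G z (g *m x) = Phi G z x.
Proof. by move=> Gg; rewrite /Phi /maxfilt orbit_mulmx. Qed.

Lemma maxfilt_subr_le z x y e : 0 < e ->
  exists2 g, G g & maxfilt G z x - maxfilt G z y <= dotv (g *m z) (x - y) + e.
Proof.
move=> e_gt0; have [a [b [Ga Gb mf_lt]]] := maxfilt_approx z x e_gt0.
have mf_ge := maxfilt_ge z y Ga Gb.
exists (b^T *m a); first by apply: GM => //; apply: subgroup_O_trmx.
rewrite -mulmxA dotv_mulmx trmxK mulmxBr dotvBr; lra.
Qed.

Lemma maxfilt_dist z x y e : 0 < e ->
  exists2 g, G g & `|maxfilt G z x - maxfilt G z y| <= `|dotv (g *m z) (x - y)| + e.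
Proof.
move=> e_gt0; have [mf_ge|mf_lt] := lerP 0 (maxfilt G z x - maxfilt G z y).
  have [g Gg mf_le] := maxfilt_subr_le z x y e_gt0.
  by exists g; rewrite // ger0_norm //; apply: le_trans mf_le _; rewrite lerD2r ler_norm.
have [g Gg mf_le] := maxfilt_subr_le z y x e_gt0.
exists g; rewrite // ltr0_norm // opprB; apply: le_trans mf_le _.
by rewrite lerD2r -opprB dotvNr -normrN ler_norm.
Qed.

Section FilterBank.
Variables (n : nat) (z : 'I_n -> 'cV[R]_d).

Lemma Phi_lipschitz M :
  (forall g, (forall i, G (g i)) -> opnorm (colmat g z) <= M) ->
  forall x y, enorm (Phi G z x - Phi G z y) <= M * enorm (x - y).
Proof.
move=> colmat_le x y; apply/ler_addgt0Pr => e e_gt0.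
set one : 'cV[R]_n := const_mx 1.
set t := e / (enorm one + 1).
have one_gt0 : 0 < enorm one + 1 by have := enorm_ge0 one; lra.
have t_gt0 : 0 < t by rewrite divr_gt0.
have /choice[g gP] : forall i, exists g, G g /\
    `|(Phi G z x - Phi G z y) i 0| <= `|dotv (g *m z i) (x - y)| + t.
  by move=> i; have [g Gg] := maxfilt_dist (z i) x y t_gt0; exists g; rewrite !mxE.
set A := colmat g z.
have Phi_le : enorm (Phi G z x - Phi G z y)
              <= enorm (map_mx Num.norm (A^T *m (x - y)) + t *: one).
  apply: enorm_le_pointwise => i.
  have -> : (map_mx Num.norm (A^T *m (x - y)) + t *: one) i 0
            = `|dotv (g i *m z i) (x - y)| + t.
    by rewrite 2!mxE colmat_trmx_mulmx !mxE mulr1.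
  rewrite [`|_ + t|]ger0_norm; first by case: (gP i).
  by rewrite addr_ge0 // ltW.
have A_le : enorm (map_mx Num.norm (A^T *m (x - y))) <= M * enorm (x - y).
  rewrite enorm_map_normr; apply: le_trans (enorm_trmx_mulmx_le _ _) _.
  by rewrite ler_wpM2r ?enorm_ge0 // colmat_le // => i; case: (gP i).
have t_le : t * enorm one <= e.
  by rewrite /t mulrAC ler_pdivrMr // ler_pM2l //; lra.
apply: (le_trans Phi_le); apply: (le_trans (enormD _ _)).
by rewrite enormZ ger0_norm ?(ltW t_gt0) //; lra.
Qed.

Lemma qdist_ge0 x y : 0 <= qdist G x y.
Proof.
apply: lb_le_inf => [|_ [p _ [q _ <-]]]; last exact: enorm_ge0.
by exists (enorm (x - y)), x; [exact: orbit_refl | exists y => //; exact: orbit_refl].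
Qed.

Lemma Phi_lipschitz_qdist M : 0 <= M ->
  (forall g, (forall i, G (g i)) -> opnorm (colmat g z) <= M) ->
  forall x y, enorm (Phi G z x - Phi G z y) <= M * qdist G x y.
Proof.
move=> M_ge0 colmat_le x y.
have [M0|M_neq0] := eqVneq M 0.
  by have := Phi_lipschitz colmat_le x y; rewrite M0 !mul0r.
have M_gt0 : 0 < M by rewrite lt_def M_neq0.
rewrite -ler_pdivrMl //; apply: lb_le_inf.
  by exists (enorm (x - y)), x; [exact: orbit_refl | exists y => //; exact: orbit_refl].
move=> _ [_ [a Ga ->] [_ [b Gb ->] <-]].
by rewrite ler_pdivrMl // -(Phi_mulmx z x Ga) -(Phi_mulmx z y Gb) Phi_lipschitz.
Qed.

Lemma lip_Phi_le_sup_colnorm : (lip_Phi G z <= sup_colnorm G z)%E.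
Proof.
have G1n : [set g : 'I_n -> 'M[R]_d | forall i, G (g i)] (fun=> 1%:M) := fun=> G1.
have colmat_le := @ereal_sup_ubound _
  [set (opnorm (colmat g z))%:E | g in [set g | forall i, G (g i)]].
rewrite /sup_colnorm; case: ereal_sup colmat_le => [M| |] colmat_le; last 2 first.
- exact: leey.
- by have := colmat_le _ (ex_intro2 _ _ _ G1n erefl); rewrite leeNy_eq.
have {}colmat_le g : (forall i, G (g i)) -> opnorm (colmat g z) <= M.
  by move=> Gg; rewrite -lee_fin; apply: colmat_le; exists g.
have M_ge0 : 0 <= M := le_trans (opnorm_ge0 _) (colmat_le _ G1n).
apply: ge_ereal_sup => _ [x [y [_ ->]]]; rewrite lee_fin.
have [->|q_neq0] := eqVneq (qdist G x y) 0; first by rewrite invr0 mulr0.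
rewrite ler_pdivrMr ?lt_def ?q_neq0 ?qdist_ge0 //.
exact: Phi_lipschitz_qdist.
Qed.

Lemma Phi0 : Phi G z 0 = 0.
Proof.
apply/matrixP => i j; rewrite !mxE; apply/le_anti/andP; split.
  apply: ge_sup.
    by exists (dotv (z i) 0), (z i); [|exists 0]; rewrite //; apply: orbit_refl.
  by move=> _ [p _ [_ [b _ ->] <-]]; rewrite mulmx0 dotvC dotv0l.
by have := maxfilt_ge (z i) 0 G1 G1; rewrite mulmx0 dotvC dotv0l.
Qed.

Lemma qdist0r x : qdist G x 0 = enorm x.
Proof.
rewrite /qdist -[X in _ = X]inf1; congr inf; apply/seteqP; split.
  by move=> _ [_ [a Ga ->] [_ [b _ ->] <-]]; rewrite mulmx0 subr0 /= enorm_orthmx ?GO.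
by move=> _ ->; exists x; [exact: orbit_refl | exists 0; rewrite ?subr0 //; exact: orbit_refl].
Qed.

Hypothesis Gneg : G (- 1%:M).

Lemma enorm_colmat_le_Phi g v : (forall i, G (g i)) ->
  enorm ((colmat g z)^T *m v) <= enorm (Phi G z v).
Proof.
move=> Gg; apply: enorm_le_pointwise => i; rewrite colmat_trmx_mulmx mxE.
apply: le_trans (ler_norm (maxfilt G (z i) v)); rewrite ler_norml.
have := maxfilt_ge (z i) v (Gg i) G1.
have := maxfilt_ge (z i) v (GM Gneg (Gg i)) G1.
by rewrite !mul1mx !mulNmx mul1mx dotvNl lerNl => -> ->.
Qed.

Lemma sup_colnorm_le_lip_Phi : (0 < d)%N -> (sup_colnorm G z <= lip_Phi G z)%E.
Proof.
move=> d_gt0; apply: ge_ereal_sup => _ [g Gg <-]; rewrite -opnorm_trmx.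
apply: opnorm_le_ereal d_gt0 _ => v v_neq0.
have ratio_le : ((enorm (Phi G z v - Phi G z 0) / qdist G v 0)%:E <= lip_Phi G z)%E.
  apply: ereal_sup_ubound; exists v, 0; split => // orbit_eq.
  have [h _ v0] : orbit G 0 v by rewrite -orbit_eq; apply: orbit_refl.
  by move: v_neq0; rewrite v0 mulmx0 eqxx.
apply: le_trans ratio_le; rewrite lee_fin Phi0 subr0 qdist0r.
by rewrite ler_wpM2r ?invr_ge0 ?enorm_ge0 ?enorm_colmat_le_Phi.
Qed.

End FilterBank.
End MaxFiltering.

Theorem theorem16 (R : realType) (d n : nat) (G : set 'M[R]_d)
  (z : 'I_n -> 'cV[R]_d) :
  is_subgroup_O G -> closed_orbits G ->
  (lip_Phi G z <= sup_colnorm G z)%E /\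
  (G (- 1%:M) -> (0 < d)%N -> lip_Phi G z = sup_colnorm G z).
Proof.
move=> HG _.
have lip_le := lip_Phi_le_sup_colnorm HG z.
split=> // Gneg d_gt0.
by apply/le_anti; rewrite lip_le sup_colnorm_le_lip_Phi.
Qed.
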